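(* Let $A$ be a finite nonempty alphabet and $\zeta:A^\omega\to A^\omega$ a bijective $\omega$-sequential function. Then for every $n\ge0$ the map $\epsilon:A^n\to A^n$, $u\mapsto\zeta(ux)[0,n]$ (independent of $x\in A^\omega$), is a bijection.
   Context: For an infinite word $z$, $z[0,n]$ denotes its prefix of length $n$. A map $\zeta:A^\omega\to A^\omega$ is $\omega$-sequential if whenever a finite word $u$ is a common prefix of $x$ and $y$, then $\zeta(x)[0,|u|]=\zeta(y)[0,|u|]$. *)

From mathcomp Require Import all_boot.
Set Warnings "-notation-overridden".
Set Implicit Arguments. Unset Strict Implicit. Unset Printing Implicit Defensive.

Definition oword (A : Type) := nat -> A.

Definition wprefix (A : Type) (n : nat) (z : oword A) : n.-tuple A :=
  [tuple z i | i < n].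

Definition concat (A : Type) (u : seq A) (x : oword A) : oword A :=
  fun i => if i < size u then nth (x 0) u i else x (i - size u).

Definition omega_sequential (A : Type) (zeta : oword A -> oword A) : Prop :=
  forall (u : seq A) (x y : oword A),
    wprefix (size u) x = in_tuple u -> wprefix (size u) y = in_tuple u ->
    wprefix (size u) (zeta x) = wprefix (size u) (zeta y).

From mathcomp Require Import all_boot.

(* Since the first n output letters of zeta depend only on the first n input
   letters, eps is well defined, and zeta^-1 yields a right inverse of it:
   pad w, pull it back through zeta and truncate.  A surjective self-map of
   the finite set A^n is a bijection. *)

Lemma val_wprefix (A : Type) n (z : oword A) :
  val (wprefix n z) = map z (iota 0 n).
Proof. by rewrite /= -val_enum_ord -map_comp enumT unlock. Qed.

Lemma wprefix_concat (A : Type) n (u : n.-tuple A) (x : oword A) :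
  wprefix n (concat u x) = u.
Proof.
apply: val_inj; rewrite val_wprefix.
apply: (@eq_from_nth _ (x 0)); first by rewrite size_map size_iota size_tuple.
move=> i; rewrite size_map size_iota => lt_i_n.
by rewrite (nth_map 0) ?size_iota // nth_iota // /concat add0n size_tuple lt_i_n.
Qed.

Lemma omega_sequential_wprefix (A : Type) (zeta : oword A -> oword A) n x y :
  omega_sequential zeta -> wprefix n x = wprefix n y ->
  wprefix n (zeta x) = wprefix n (zeta y).
Proof.
move=> zeta_seq /(congr1 val); rewrite !val_wprefix => xy.
have prefixE u z : map z (iota 0 (size u)) = u -> wprefix (size u) z = in_tuple u.
  by move=> zu; apply: val_inj; rewrite val_wprefix.
pose u := map x (iota 0 n); have size_u : size u = n by rewrite size_map size_iota.
have xu : wprefix (size u) x = in_tuple u by apply: prefixE; rewrite size_u.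
have yu : wprefix (size u) y = in_tuple u by apply: prefixE; rewrite size_u -xy.
move/(congr1 val): (zeta_seq u x y xu yu); rewrite !val_wprefix size_u => zxy.
by apply: val_inj; rewrite !val_wprefix.
Qed.

Lemma canF_bij (T : finType) (f g : T -> T) : cancel g f -> bijective f.
Proof. by move=> gK; apply: (bij_can_bij _ gK); apply/injF_bij/(can_inj gK). Qed.

Theorem lemma4p5 (A : finType) (a0 : A) (zeta : oword A -> oword A) :
  bijective zeta -> omega_sequential zeta ->
  forall n : nat,
    exists eps : n.-tuple A -> n.-tuple A,
      (forall (u : n.-tuple A) (x : oword A),
          eps u = wprefix n (zeta (concat u x))) /\
      bijective eps.
Proof.
move=> [zeta_inv _ zeta_invK] zeta_seq n.
pose pad (u : n.-tuple A) := concat u (fun _ => a0).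
pose eps u := wprefix n (zeta (pad u)).
have eps_wprefix u z : wprefix n z = u -> eps u = wprefix n (zeta z).
  by move=> zu; apply: omega_sequential_wprefix; rewrite // wprefix_concat.
exists eps; split=> [u x|]; first by apply: eps_wprefix; rewrite wprefix_concat.
apply: (@canF_bij _ _ (fun w => wprefix n (zeta_inv (pad w)))) => w.
by rewrite (eps_wprefix _ _ erefl) zeta_invK wprefix_concat.
Qed.
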